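(* For every integer $w\ge 2$ and every $y\in[(1-2^{-w})^{1/2},1)$, \[g(y,w)\le K_w\, g\big((1-2^{-w})^{1/2},w\big)=0.15\,K_w\,\alpha^{-l_w}\,w\,(2c)^{-w}\left(1-2^{-w}\right)^{-1},\] where $K_2=1.11614$, $K_3=1.03$, $K_4=1.01$ and $K_w=1$ for all $w\ge 5$. In particular $K_{w+1}\le K_w$ for all $w\ge 2$.
   Context: Constants: $c=0.7$, $\alpha=1-10^{-4}$, $\psi=13/10$, $\chi=1/2$, and for a positive integer $w$, $l_w=\lceil\log_6(w+1)\rceil$. The function $g$ is \[g(y,w)=c^{-w}\alpha^{-l_w}\,w\,\frac{1-y^2}{y^2}\left(1-(1-y^2)^{1/w}\right)\left(\psi-\left(\frac{(1-y^2)^{1/w}}{1-(1-y^2)^{1/w}}\right)^{\chi}\right).\] *)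

From Stdlib Require Import Reals.
From mathcomp Require prime.
Open Scope R_scope.

Definition c : R := 7/10.
Definition alpha : R := 1 - / 10 ^ 4.
Definition psi : R := 13/10.
Definition chi : R := 1/2.

(* l_w = ceil(log_6(w+1)) = smallest natural e with w+1 <= 6^e *)
Definition lw (w : nat) : nat := prime.up_log 6 (w + 1).

Definition tw (y : R) (w : nat) : R := Rpower (1 - y ^ 2) (1 / INR w).

Definition g (y : R) (w : nat) : R :=
  Rpower c (- INR w) * Rpower alpha (- INR (lw w)) * INR w
  * ((1 - y ^ 2) / y ^ 2) * (1 - tw y w)
  * (psi - Rpower (tw y w / (1 - tw y w)) chi).

Definition Kw (w : nat) : R :=
  match w with
  | 2%nat => 111614 / 100000
  | 3%nat => 103 / 100
  | 4%nat => 101 / 100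
  | _ => 1
  end.

(** With [s = 1 - y^2], [t = s^(1/w)] and [u = sqrt (t / (1 - t))] one has
    [t = u^2 / (1 + u^2)], and [y] runs over [[sqrt (1 - 2^-w), 1)] exactly when
    [t] runs over [(0, 1/2]], i.e. [u] over [(0, 1]], the endpoint [u = 1]
    giving [y = sqrt (1 - 2^-w)].  In these variables the bound on [g]
    becomes the polynomial inequality
    [(2^w - 1) t^w (1 - t) (psi - u) <= 0.15 K_w (1 - t^w)] on [(0, 1]].
    For [w = 2, 3, 4] it is certified by nonnegative Bernstein expansions on
    subintervals of [[0, 1]].  For [w >= 5] it reduces to [w = 5]: since
    [(1 - t) (psi - u) >= 0.15] it suffices that [(2t)^w (1 - t) (psi - u) <= 0.15],
    and [(2t)^w] decreases in [w] because [2t <= 1]. *)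

From Stdlib Require Import Reals Lra Lia List.
Import ListNotations.
Open Scope R_scope.

Fixpoint bernstein_from (a b u : R) (n k : nat) (cs : list R) : R :=
  match cs with
  | [] => 0
  | c0 :: cs' => c0 * (u - a) ^ k * (b - u) ^ (n - k) + bernstein_from a b u n (S k) cs'
  end.

Definition bernstein (a b : R) (cs : list R) (u : R) : R :=
  bernstein_from a b u (length cs - 1) 0 cs.

Definition nonneg_on (a b : R) (p : R -> R) : Prop :=
  forall u, a <= u <= b -> 0 <= p u.

Lemma bernstein_from_nonneg a b u n k cs :
  Forall (Rle 0) cs -> a <= u <= b -> 0 <= bernstein_from a b u n k cs.
Proof.
  intros Hcs Hu; revert k; induction Hcs as [|c0 cs' Hc0 _ IH]; intros k; simpl.
  - lra.
  - assert (0 <= (u - a) ^ k) by (apply pow_le; lra).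
    assert (0 <= (b - u) ^ (n - k)) by (apply pow_le; lra).
    specialize (IH (S k)).
    assert (0 <= c0 * (u - a) ^ k * (b - u) ^ (n - k))
      by (repeat apply Rmult_le_pos; assumption).
    lra.
Qed.

Lemma nonneg_on_bernstein cs a b (p : R -> R) :
  Forall (Rle 0) cs -> (forall u, p u = bernstein a b cs u) -> nonneg_on a b p.
Proof.
  intros Hcs Hp u Hu; rewrite Hp; exact (bernstein_from_nonneg _ _ _ _ _ _ Hcs Hu).
Qed.

Lemma nonneg_on_split m a b p :
  nonneg_on a m p -> nonneg_on m b p -> nonneg_on a b p.
Proof.
  intros Ham Hmb u Hu; destruct (Rle_dec u m); [apply Ham | apply Hmb]; lra.
Qed.

Ltac by_bernstein cs :=
  apply (nonneg_on_bernstein cs);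
  [ repeat (apply Forall_cons; [lra |]); apply Forall_nil
  | intros ?; cbv beta iota delta [Kw bernstein bernstein_from length Nat.sub]; field ].

Lemma pow_div x y n : (x / y)^n = x^n / y^n.
Proof. unfold Rdiv; rewrite Rpow_mult_distr, pow_inv; reflexivity. Qed.

Definition tail_bound (K : R) (w : nat) (t u : R) : Prop :=
  (2^w - 1) * t^w * ((1 - t) * (psi - u)) <= 15/100 * K * (1 - t^w).

(* [(1 + u^2)^(w+1)] times the slack of [tail_bound K w (u^2 / (1 + u^2)) u]. *)
Definition margin (K : R) (w : nat) (u : R) : R :=
  15/100 * K * ((1 + u^2)^w - (u^2)^w) * (1 + u^2) - (2^w - 1) * (u^2)^w * (13/10 - u).

Lemma margin2_nonneg : nonneg_on 0 1 (margin (Kw 2) 2).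
Proof.
  unfold margin.
  apply (nonneg_on_split (1/2)).
  { by_bernstein [167421/31250; 167421/6250; 7199103/125000; 8203629/125000;
                  7927839/250000; 262263/50000]. }
  apply (nonneg_on_split (3/4)).
  { by_bernstein [524526/3125; 11741886/15625; 3929154/3125; 2960943/3125;
                  38179533/125000; 173157/5000]. }
  apply (nonneg_on_split (13/16)).
  { by_bernstein [22164096/625; 2241394944/15625; 699325296/3125; 521450376/3125;
                  1843226613/31250; 9899379/1250]. }
  apply (nonneg_on_split (27/32)).
  { by_bernstein [158390064/625; 14952324096/15625; 21477548616/15625;
                  14447704056/15625; 4477611819/15625; 514930758/15625]. }
  apply (nonneg_on_split (55/64)).
  { by_bernstein [16477784256/15625; 51941592816/15625; 56481043584/15625;
                  23168217288/15625; 91193796/625; 128909511/15625]. }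
  apply (nonneg_on_split (111/128)).
  { by_bernstein [67585709703168/15625; 44416580714496/15625; 857573108219904/15625;
                  241145700286464/625; 14061976298029056/15625;
                  15342856894365696/15625; 8119888898555904/15625;
                  338221606453248/3125]. }
  apply (nonneg_on_split (7/8)).
  { by_bernstein [20643408597/3125; 743005828164/15625; 2070272327424/15625;
                  2787562051584/15625; 1820264103936/15625; 463185641472/15625]. }
  by_bernstein [1766913/62500; 39087501/62500; 68450016/15625; 161626776/15625;
                155977344/15625; 53517312/15625].
Qed.

Lemma margin3_nonneg : nonneg_on 0 1 (margin (Kw 3) 3).
Proof.
  unfold margin.
  apply (nonneg_on_split (1/2)).
  { by_bernstein [2472/125; 17304/125; 54384/125; 19776/25; 112167/125; 79413/125;
                  242287/1000; 7339/200]. }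
  apply (nonneg_on_split (3/4)).
  { by_bernstein [117424/25; 4226464/125; 12837972/125; 21200508/125; 20395713/125;
                  11318052/125; 13272051/500; 63147/20]. }
  apply (nonneg_on_split (7/8)).
  { by_bernstein [2020704/5; 318081984/125; 167591784/25; 1190485032/125;
                  977885226/125; 460325112/125; 228073783/250; 23014769/250]. }
  by_bernstein [5891780864/125; 8354677248/25; 23984572416/25; 170718750208/125;
                111040104192/125; 18384531456/125; 33067220992/125;
                107799379968/125; 21840789504/25; 9781116928/25; 8455716864/125].
Qed.

Lemma margin4_nonneg : nonneg_on 0 1 (margin (Kw 4) 4).
Proof.
  unfold margin.
  by_bernstein [303/2000; 909/500; 21513/2000; 8181/200; 22119/200; 27876/125;
                85749/250; 50601/125; 687897/2000; 89397/500; 16347/400; 27/1000;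
                9/200].
Qed.

(* [(1 + u^2)^6] times the slack of [(2t)^5 (1 - t) (psi - u) <= 0.15]. *)
Lemma dyadic5_margin_nonneg :
  nonneg_on 0 1 (fun u => 15/100 * (1 + u^2)^6 - 2^5 * (u^2)^5 * (13/10 - u)).
Proof.
  by_bernstein [3/20; 9/5; 54/5; 42; 117; 1224/5; 1968/5; 2448/5; 468; 336; 656/5;
                32/5; 0].
Qed.

Lemma tail_bound_of_margin K w u :
  0 < u -> 0 <= margin K w u -> tail_bound K w (u^2 / (1 + u^2)) u.
Proof.
  intros Hu Hm; unfold tail_bound.
  assert (Hq : 0 < 1 + u^2) by nra.
  assert (HQ : 0 < (1 + u^2)^w) by (apply pow_lt; lra).
  rewrite pow_div.
  assert (E : 15/100 * K * (1 - (u^2)^w / (1 + u^2)^w)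
              - (2^w - 1) * ((u^2)^w / (1 + u^2)^w) * ((1 - u^2 / (1 + u^2)) * (psi - u))
            = margin K w u / ((1 + u^2)^w * (1 + u^2)))
    by (unfold margin, psi; field; lra).
  assert (0 <= margin K w u / ((1 + u^2)^w * (1 + u^2))).
  { apply Rmult_le_pos; [exact Hm | apply Rlt_le, Rinv_0_lt_compat, Rmult_lt_0_compat; lra]. }
  lra.
Qed.

Lemma excess_ge u :
  0 < u <= 1 -> 15/100 <= (1 - u^2 / (1 + u^2)) * (psi - u).
Proof.
  intros Hu; unfold psi.
  assert (Hq : 0 < 1 + u^2) by nra.
  replace ((1 - u^2 / (1 + u^2)) * (13/10 - u))
    with (15/100 + (1 - u) * (115/100 + 15/100 * u) / (1 + u^2)) by (field; lra).
  assert (0 <= (1 - u) * (115/100 + 15/100 * u) / (1 + u^2))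
    by (apply Rmult_le_pos; [nra | apply Rlt_le, Rinv_0_lt_compat; lra]).
  lra.
Qed.

Lemma tail_bound_large w u :
  (5 <= w)%nat -> 0 < u <= 1 -> tail_bound 1 w (u^2 / (1 + u^2)) u.
Proof.
  intros Hw Hu; unfold tail_bound.
  assert (Hq : 0 < 1 + u^2) by nra.
  set (t := u^2 / (1 + u^2)); set (X := (1 - t) * (psi - u)).
  assert (Ht : 0 <= 2 * t <= 1).
  { unfold t; split.
    - apply Rmult_le_pos; [lra | apply Rmult_le_pos; [nra | apply Rlt_le, Rinv_0_lt_compat; lra]].
    - replace (2 * (u^2 / (1 + u^2))) with (1 - (1 - u^2) / (1 + u^2)) by (field; lra).
      assert (0 <= (1 - u^2) / (1 + u^2))
        by (apply Rmult_le_pos; [nra | apply Rlt_le, Rinv_0_lt_compat; lra]).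
      lra. }
  assert (HX : 15/100 <= X) by exact (excess_ge u Hu).
  assert (H5 : (2 * t)^5 * X <= 15/100).
  { pose proof (dyadic5_margin_nonneg u ltac:(lra)) as P; cbv beta in P.
    unfold X, t, psi; rewrite Rpow_mult_distr, pow_div.
    assert (HQ : 0 < (1 + u^2)^5) by (apply pow_lt; lra).
    apply Rmult_le_reg_r with ((1 + u^2)^6); [apply pow_lt; lra |].
    replace (2^5 * ((u^2)^5 / (1 + u^2)^5) * ((1 - u^2 / (1 + u^2)) * (13/10 - u))
             * (1 + u^2)^6)
      with (2^5 * (u^2)^5 * (13/10 - u)) by (field; lra).
    lra. }
  assert (Hdec : (2 * t)^w <= (2 * t)^5).
  { replace w with (5 + (w - 5))%nat by lia; rewrite pow_add.
    assert (0 <= (2 * t)^5) by (apply pow_le; lra).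
    assert ((2 * t)^(w - 5) <= 1) by (rewrite <- (pow1 (w - 5)); apply pow_incr; lra).
    nra. }
  assert (Htw : 0 <= t^w) by (apply pow_le; lra).
  assert ((2 * t)^w * X <= (2 * t)^5 * X) by (apply Rmult_le_compat_r; lra).
  rewrite Rpow_mult_distr in *.
  nra.
Qed.

Lemma tail_bound_Kw w u :
  (2 <= w)%nat -> 0 < u <= 1 -> tail_bound (Kw w) w (u^2 / (1 + u^2)) u.
Proof.
  intros Hw Hu.
  assert (Hu01 : 0 <= u <= 1) by lra.
  destruct w as [|[|[|[|[|w']]]]]; try lia.
  - exact (tail_bound_of_margin _ _ _ (proj1 Hu) (margin2_nonneg u Hu01)).
  - exact (tail_bound_of_margin _ _ _ (proj1 Hu) (margin3_nonneg u Hu01)).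
  - exact (tail_bound_of_margin _ _ _ (proj1 Hu) (margin4_nonneg u Hu01)).
  - apply tail_bound_large; [lia | exact Hu].
Qed.

Lemma Rpower_root_pow x n : 0 < x -> (0 < n)%nat -> Rpower x (1 / INR n) ^ n = x.
Proof.
  intros Hx Hn.
  rewrite <- Rpower_pow by (unfold Rpower; apply exp_pos).
  rewrite Rpower_mult; replace (1 / INR n * INR n) with 1.
  - exact (Rpower_1 x Hx).
  - field; apply not_0_INR; lia.
Qed.

Lemma Rpower_pow_root x n : 0 < x -> (0 < n)%nat -> Rpower (x ^ n) (1 / INR n) = x.
Proof.
  intros Hx Hn.
  rewrite <- Rpower_pow, Rpower_mult by exact Hx.
  replace (INR n * (1 / INR n)) with 1.
  - exact (Rpower_1 x Hx).
  - field; apply not_0_INR; lia.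
Qed.

Definition odds_root (t : R) : R := Rpower (t / (1 - t)) chi.

Lemma odds_root_sqrt t : 0 < t < 1 -> odds_root t = sqrt (t / (1 - t)).
Proof.
  intros Ht; unfold odds_root, chi; replace (1 / 2) with (/ 2) by field.
  apply Rpower_sqrt, Rdiv_lt_0_compat; lra.
Qed.

Lemma odds_root_spec t :
  0 < t <= / 2 ->
  0 < odds_root t <= 1 /\ t = odds_root t ^ 2 / (1 + odds_root t ^ 2).
Proof.
  intros Ht.
  assert (Hodds : 0 < t / (1 - t)) by (apply Rdiv_lt_0_compat; lra).
  assert (Hodds1 : t / (1 - t) <= 1).
  { apply Rmult_le_reg_r with (1 - t); [lra |].
    unfold Rdiv; rewrite Rmult_assoc, Rinv_l by lra; lra. }
  rewrite odds_root_sqrt by lra.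
  rewrite pow2_sqrt by lra.
  split.
  - split; [apply sqrt_lt_R0; exact Hodds |].
    rewrite <- sqrt_1 at 2; apply sqrt_le_1_alt; exact Hodds1.
  - field; lra.
Qed.

Definition threshold (w : nat) : R := sqrt (1 - / 2 ^ w).

Lemma inv_two_pow_lt1 w : (0 < w)%nat -> / 2 ^ w < 1.
Proof.
  intros Hw; pose proof (Rlt_pow_R1 2 w ltac:(lra) Hw).
  rewrite <- Rinv_1; apply Rinv_lt_contravar; lra.
Qed.

Lemma threshold_sq w : (0 < w)%nat -> threshold w ^ 2 = 1 - / 2 ^ w.
Proof.
  intros Hw; unfold threshold; apply pow2_sqrt.
  pose proof (inv_two_pow_lt1 w Hw); lra.
Qed.

Lemma threshold_pos w : (0 < w)%nat -> 0 < threshold w.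
Proof.
  intros Hw; unfold threshold; apply sqrt_lt_R0.
  pose proof (inv_two_pow_lt1 w Hw); lra.
Qed.

Lemma tw_range w y :
  (0 < w)%nat -> threshold w <= y < 1 -> 0 < tw y w <= / 2 /\ tw y w ^ w = 1 - y ^ 2.
Proof.
  intros Hw Hy.
  pose proof (threshold_pos w Hw) as Hy0.
  assert (Hsq : threshold w ^ 2 <= y ^ 2) by (apply pow_incr; lra).
  rewrite threshold_sq in Hsq by exact Hw.
  assert (Hs : 0 < 1 - y ^ 2) by nra.
  split; [split |].
  - unfold tw, Rpower; apply exp_pos.
  - rewrite <- (Rpower_pow_root (/ 2) w) by (lra || exact Hw).
    unfold tw; rewrite pow_inv.
    apply Rle_Rpower_l; [apply Rlt_le, Rdiv_lt_0_compat; [lra | apply lt_0_INR; exact Hw] | lra].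
  - unfold tw; apply Rpower_root_pow; assumption.
Qed.

Definition gscale (w : nat) : R :=
  Rpower c (- INR w) * Rpower alpha (- INR (lw w)) * INR w.

Lemma gscale_pos w : (0 < w)%nat -> 0 < gscale w.
Proof.
  intros Hw; unfold gscale, Rpower.
  apply Rmult_lt_0_compat; [apply Rmult_lt_0_compat; apply exp_pos | apply lt_0_INR, Hw].
Qed.

Lemma g_eq y w :
  g y w = gscale w * ((1 - y ^ 2) / y ^ 2) * ((1 - tw y w) * (psi - odds_root (tw y w))).
Proof. unfold g, gscale, odds_root; ring. Qed.

Lemma g_threshold w : (0 < w)%nat -> g (threshold w) w = gscale w * (15/100 / (2 ^ w - 1)).
Proof.
  intros Hw.
  pose proof (Rlt_pow_R1 2 w ltac:(lra) Hw) as HB.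
  assert (Ht : tw (threshold w) w = / 2).
  { unfold tw; rewrite threshold_sq by exact Hw.
    replace (1 - (1 - / 2 ^ w)) with ((/ 2) ^ w) by (rewrite pow_inv; ring).
    apply Rpower_pow_root; [lra | exact Hw]. }
  rewrite g_eq, Ht, threshold_sq by exact Hw.
  rewrite odds_root_sqrt by lra.
  replace (/ 2 / (1 - / 2)) with 1 by field; rewrite sqrt_1.
  unfold psi; field; lra.
Qed.

Lemma g_le_Kw_threshold w y :
  (2 <= w)%nat -> threshold w <= y < 1 -> g y w <= Kw w * g (threshold w) w.
Proof.
  intros Hw Hy.
  pose proof (Rlt_pow_R1 2 w ltac:(lra) ltac:(lia)) as HB.
  destruct (tw_range w y ltac:(lia) Hy) as [Ht Hpow].
  destruct (odds_root_spec _ Ht) as [Hu Htu].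
  pose proof (tail_bound_Kw w _ Hw Hu) as Hb.
  rewrite <- Htu in Hb; unfold tail_bound in Hb; rewrite Hpow in Hb.
  pose proof (gscale_pos w ltac:(lia)) as HS.
  rewrite g_eq, g_threshold by lia.
  set (s := 1 - y ^ 2) in *; set (X := (1 - tw y w) * (psi - odds_root (tw y w))) in *.
  pose proof (threshold_pos w ltac:(lia)).
  assert (Hs : 0 < s < 1) by (unfold s; nra).
  replace (y ^ 2) with (1 - s) by (unfold s; ring).
  assert (Hratio : s / (1 - s) * X <= 15/100 * Kw w / (2 ^ w - 1)).
  { apply Rmult_le_reg_r with ((1 - s) * (2 ^ w - 1)); [nra |].
    replace (s / (1 - s) * X * ((1 - s) * (2 ^ w - 1))) with ((2 ^ w - 1) * s * X)
      by (field; lra).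
    replace (15/100 * Kw w / (2 ^ w - 1) * ((1 - s) * (2 ^ w - 1)))
      with (15/100 * Kw w * (1 - s)) by (field; lra).
    exact Hb. }
  replace (Kw w * (gscale w * (15/100 / (2 ^ w - 1))))
    with (gscale w * (15/100 * Kw w / (2 ^ w - 1))) by (field; lra).
  rewrite Rmult_assoc; apply Rmult_le_compat_l; lra.
Qed.

Lemma Kw_g_threshold w :
  (0 < w)%nat ->
  Kw w * g (threshold w) w
  = 15 / 100 * Kw w * Rpower alpha (- INR (lw w)) * INR w
    * Rpower (2 * c) (- INR w) * / (1 - / 2 ^ w).
Proof.
  intros Hw.
  pose proof (Rlt_pow_R1 2 w ltac:(lra) Hw) as HB.
  rewrite g_threshold by exact Hw; unfold gscale.
  rewrite <- Rpower_mult_distr by (unfold c; lra).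
  rewrite (Rpower_Ropp 2), Rpower_pow by lra.
  field; lra.
Qed.

Lemma Kw_succ_le w : (2 <= w)%nat -> Kw (S w) <= Kw w.
Proof. intros Hw; destruct w as [|[|[|[|[|w']]]]]; try lia; simpl; lra. Qed.

Theorem lemma27 :
  forall w : nat, (2 <= w)%nat ->
    (forall y : R, sqrt (1 - / 2 ^ w) <= y < 1 ->
       g y w <= Kw w * g (sqrt (1 - / 2 ^ w)) w)
    /\ Kw w * g (sqrt (1 - / 2 ^ w)) w
       = 15 / 100 * Kw w * Rpower alpha (- INR (lw w)) * INR w
         * Rpower (2 * c) (- INR w) * / (1 - / 2 ^ w)
    /\ Kw (S w) <= Kw w.
Proof.
  intros w Hw; split; [| split].
  - intros y; exact (g_le_Kw_threshold w y Hw).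
  - exact (Kw_g_threshold w ltac:(lia)).
  - exact (Kw_succ_le w Hw).
Qed.
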